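(* For any simple undirected graph $G$ with $n$ vertices, $$\Phi_2=\sum_{\{st,uv\}\in Q}(k_s+k_t)(k_u+k_v)=\frac12\sum_{st\in E}(k_s+k_t)\Big(n\langle k^2\rangle-(\xi(s)+\xi(t))-k_s(k_s-1)-k_t(k_t-1)\Big).$$
   Context: $k_x$ is the degree of $x$, $\langle k^2\rangle=\frac1n\sum_x k_x^2$, $\xi(s)=\sum_{t\in\Gamma(s)}k_t$ is the sum of the degrees of the neighbours of $s$. $Q$ is the set of unordered pairs $\{st,uv\}$ of edges with $s,t,u,v$ pairwise distinct. *)

From HB Require Import structures.
From mathcomp Require Import all_boot all_order all_algebra.
Set Implicit Arguments. Unset Strict Implicit. Unset Printing Implicit Defensive.
Import Order.TTheory GRing.Theory Num.Theory.

Definition simple_graph (T : finType) (e : rel T) : Prop :=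
  symmetric e /\ irreflexive e.

Section Graph.
Variables (T : finType) (e : rel T).

Definition deg (x : T) : nat := #|[set y | e x y]|.

Definition edges : {set {set T}} :=
  [set A : {set T} | [exists s, exists t, e s t && (A == [set s; t])]].

Definition Qpairs : {set {set {set T}}} :=
  [set P : {set {set T}} | [exists s, exists t, exists u, exists v,
     [&& e s t, e u v,
         [&& s != t, s != u, s != v, t != u, t != v & u != v] &
         P == [set [set s; t]; [set u; v]]]]].

Local Open Scope ring_scope.

Definition kR (x : T) : rat := (deg x)%:R.

Definition mean_k2 : rat := (#|T|%:R)^-1 * \sum_(x : T) kR x ^+ 2.

Definition xi (s : T) : rat := \sum_(t in [set y | e s y]) kR t.

Definition edge_deg_sum (A : {set T}) : rat := \sum_(x in A) kR x.

Definition Phi2 : rat := \sum_(P in Qpairs) \prod_(A in P) edge_deg_sum A.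

Definition rhs_term (A : {set T}) : rat :=
  edge_deg_sum A *
  (#|T|%:R * mean_k2 - \sum_(x in A) xi x - \sum_(x in A) kR x * (kR x - 1)).

End Graph.

(* Counting ordered pairs (A, B) of disjoint edges counts every element of Q
   twice, so 2 Phi_2 = sum_A w(A) sum_{B disjoint from A} w(B), where
   w({s,t}) = k_s + k_t.  For A = {s,t} the inner sum is, by inclusion-exclusion,
   the sum of w over all edges, which is sum_x k_x^2 = n<k^2> since every x lies
   on k_x edges, minus the sums over the edges at s and at t, which are
   k_s^2 + xi(s) and k_t^2 + xi(t), plus w(A) for the one edge containing both. *)

From mathcomp Require Import all_boot all_order all_algebra.
From mathcomp Require Import ring.
Set Implicit Arguments. Unset Strict Implicit. Unset Printing Implicit Defensive.
Import Order.TTheory GRing.Theory Num.Theory.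
Local Open Scope ring_scope.

Lemma eq_set2 (X : finType) (a b c d : X) : c != d ->
  ([set a; b] == [set c; d]) = ((a, b) == (c, d)) || ((a, b) == (d, c)).
Proof.
move=> ncd; apply/eqP/idP => [E|]; last first.
  by case/orP=> /eqP[-> ->]; rewrite // setUC.
have /set2P[] : a \in [set c; d] by rewrite -E set21.
all: have /set2P[] : b \in [set c; d] by rewrite -E set22.
all: move=> eb ea; subst a b; rewrite ?eqxx ?orbT //.
- by have := set22 c d; rewrite -E !inE orbb eq_sym (negbTE ncd).
- by have := set21 c d; rewrite -E !inE orbb (negbTE ncd).
Qed.

Lemma sum_card2_sets (V : nmodType) (X : finType) (S : {set {set X}})
    (F : {set X} -> V) :
  {in S, forall A : {set X}, #|A| = 2%N} ->
  (\sum_(P in S) F P) *+ 2 = \sum_x \sum_(y | [set x; y] \in S) F [set x; y].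
Proof.
move=> S2; rewrite pair_big_dep /= (partition_big (fun p => [set p.1; p.2]) (mem S)) //=.
rewrite -sumrMnl; apply: eq_bigr => P PS.
have /cards2P[a [b [nab defP]]] : #|P| == 2%N by rewrite S2.
rewrite {}defP in PS *.
rewrite (eq_bigr (fun _ => F [set a; b])) => [|p /andP[_ /eqP ->]] //.
rewrite sumr_const; congr (_ *+ _).
have ab_ba : (a, b) != (b, a) by rewrite xpair_eqE negb_and nab.
have := cards2 (a, b) (b, a); rewrite ab_ba => <-; apply: eq_card => -[x y].
rewrite !inE [RHS]unfold_in /= eq_set2 // andb_idl // => /orP[] /eqP[-> ->] //.
by rewrite setUC.
Qed.

Lemma disjoint_set2 (X : finType) (a b : X) (B : {set X}) :
  [disjoint [set a; b] & B] = (a \notin B) && (b \notin B).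
Proof. by rewrite disjoints_subset subUset !sub1set !inE. Qed.

Lemma sumr_set2 (V : nmodType) (X : finType) (a b : X) (F : X -> V) : a != b ->
  \sum_(x in [set a; b]) F x = F a + F b.
Proof. by move=> nab; rewrite big_setU1 ?big_set1 // inE. Qed.

Lemma prodr_set2 (R : comSemiRingType) (X : finType) (a b : X) (F : X -> R) :
  a != b -> \prod_(x in [set a; b]) F x = F a * F b.
Proof. by move=> nab; rewrite big_setU1 ?big_set1 // inE. Qed.

Lemma sumr_inclusion_exclusion2 (V : zmodType) (I : finType) (P a b : pred I)
    (F : I -> V) :
  \sum_(i | [&& P i, ~~ a i & ~~ b i]) F i =
  \sum_(i | P i) F i - \sum_(i | P i && a i) F i - \sum_(i | P i && b i) F i
  + \sum_(i | [&& P i, a i & b i]) F i.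
Proof.
rewrite !(big_mkcond (fun i => _ && _)) (big_mkcond P) -!sumrB -big_split /=.
by apply: eq_bigr => i _; case: (P i) (a i) (b i) => [] [] [];
  rewrite /= ?(subrr, subr0, addr0, sub0r, addNr).
Qed.

Section SimpleGraph.
Variables (T : finType) (e : rel T).
Hypotheses (e_sym : symmetric e) (e_irr : irreflexive e).

Lemma edge_neq {s t} : e s t -> s != t.
Proof. by apply: contraTneq => ->; rewrite e_irr. Qed.

Lemma set2_edges s t : e s t -> [set s; t] \in edges e.
Proof.
move=> est; rewrite inE; apply/existsP; exists s; apply/existsP; exists t.
by rewrite est /=.
Qed.

Lemma edgesP A : reflect (exists s t, e s t /\ A = [set s; t]) (A \in edges e).
Proof.
apply: (iffP idP) => [|[s [t [est ->]]]]; last exact: set2_edges.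
by rewrite inE => /existsP[s /existsP[t /andP[est /eqP ->]]]; exists s, t.
Qed.

Lemma card_edge A : A \in edges e -> #|A| = 2%N.
Proof. by case/edgesP=> s [t [est ->]]; rewrite cards2 (edge_neq est). Qed.

Lemma edges_at s :
  [set A in edges e | s \in A] = [set [set s; t] | t in [set y | e s y]].
Proof.
apply/setP => A; rewrite inE; apply/andP/imsetP => [[/edgesP[u [v [euv ->]]]]|].
  by case/set2P=> ->; [exists v | exists u]; rewrite ?inE ?(e_sym v) // setUC.
by case=> t; rewrite inE => est ->; rewrite set2_edges ?set21.
Qed.

Lemma set2_inj_in s : {in [set y | e s y] &, injective (fun t => [set s; t])}.
Proof.
move=> t t'; rewrite inE => est _ E.
have /set2P[ts|] // : t \in [set s; t'] by rewrite -E set22.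
by rewrite ts e_irr in est.
Qed.

Lemma card_edges_at s : #|[set A in edges e | s \in A]| = deg e s.
Proof. by rewrite edges_at card_in_imset //; exact: set2_inj_in. Qed.

Lemma sum_edge_deg_sum : \sum_(A in edges e) edge_deg_sum e A = \sum_x kR e x ^+ 2.
Proof.
rewrite (exchange_big_dep predT) //=; apply: eq_bigr => x _.
by rewrite -big_set sumr_const card_edges_at -mulr_natr expr2.
Qed.

Lemma sum_edges_at s :
  \sum_(A in edges e | s \in A) edge_deg_sum e A = kR e s ^+ 2 + xi e s.
Proof.
rewrite -big_set edges_at big_imset /=; last exact: set2_inj_in.
rewrite (eq_bigr (fun t => kR e s + kR e t)) => [|t]; last first.
  by rewrite inE => /edge_neq nst; rewrite /edge_deg_sum sumr_set2.
by rewrite big_split sumr_const -mulr_natr expr2.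
Qed.

Lemma sum_edges_at2 s t : e s t ->
  \sum_(A in edges e | (s \in A) && (t \in A)) edge_deg_sum e A = kR e s + kR e t.
Proof.
move=> est; rewrite (big_pred1 [set s; t]) => [|A]; last first.
  apply/idP/eqP=> [/and3P[/card_edge cardA sA tA] | ->]; last first.
    by rewrite set2_edges // set21 set22.
  apply/esym/eqP.
  by rewrite eqEcard subUset !sub1set sA tA cardA cards2 (edge_neq est).
by rewrite /edge_deg_sum sumr_set2 // (edge_neq est).
Qed.

Lemma sum_edges_disjoint A : A \in edges e ->
  \sum_(B in edges e | [disjoint A & B]) edge_deg_sum e B =
  \sum_x kR e x ^+ 2 - \sum_(x in A) xi e x - \sum_(x in A) kR e x * (kR e x - 1).
Proof.
case/edgesP=> s [t [est ->]].
rewrite (eq_bigl _ _ (fun B => congr1 (andb _) (disjoint_set2 s t B))).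
rewrite (sumr_inclusion_exclusion2 (mem (edges e)) (fun B => s \in B) (fun B => t \in B)).
rewrite sum_edge_deg_sum !sum_edges_at sum_edges_at2 // !sumr_set2 ?(edge_neq est) //.
ring.
Qed.

Lemma disjoint_edge_neq A (B : {set T}) : A \in edges e -> [disjoint A & B] -> A != B.
Proof.
by case/edgesP=> s [t [_ ->]]; apply: contraTneq => <-; rewrite disjoint_set2 set21.
Qed.

Lemma QpairsP P : reflect
  (exists A B, [&& A \in edges e, B \in edges e & [disjoint A & B]] /\ P = [set A; B])
  (P \in Qpairs e).
Proof.
apply: (iffP idP) => [|[_ [_ [/and3P[/edgesP[s [t [est ->]]]
                                      /edgesP[u [v [euv ->]]] +] ->]]]].
  rewrite inE => /existsP[s /existsP[t /existsP[u /existsP[v]]]].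
  case/and4P=> est euv /and5P[_ su sv tu /andP[tv _]] /eqP ->.
  exists [set s; t], [set u; v]; rewrite !set2_edges // disjoint_set2 !inE !negb_or.
  by rewrite su sv tu tv.
rewrite disjoint_set2 !inE !negb_or => /andP[/andP[su sv] /andP[tu tv]].
apply/existsP; exists s; apply/existsP; exists t.
apply/existsP; exists u; apply/existsP; exists v.
by rewrite est euv (edge_neq est) (edge_neq euv) su sv tu tv eqxx.
Qed.

Lemma card_Qpair P : P \in Qpairs e -> #|P| = 2%N.
Proof.
by case/QpairsP=> A [B [/and3P[AE _ dAB] ->]]; rewrite cards2 disjoint_edge_neq.
Qed.

Lemma mem_Qpairs_set2 A B :
  ([set A; B] \in Qpairs e) = [&& A \in edges e, B \in edges e & [disjoint A & B]].
Proof.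
apply/QpairsP/idP => [[A' [B' [/and3P[A'E B'E dA'B'] /eqP]]] | ABQ]; last first.
  by exists A, B.
rewrite eq_set2 ?disjoint_edge_neq // => /orP[] /eqP[-> ->].
  by rewrite A'E B'E.
by rewrite A'E B'E disjoint_sym.
Qed.

Lemma Phi2_ordered : Phi2 e *+ 2 = \sum_(A in edges e)
  edge_deg_sum e A * \sum_(B in edges e | [disjoint A & B]) edge_deg_sum e B.
Proof.
rewrite /Phi2 sum_card2_sets; last exact: card_Qpair.
rewrite big_mkcond [RHS]big_mkcond; apply: eq_bigr => A _.
rewrite (eq_bigl _ _ (mem_Qpairs_set2 A)).
have [AE|_] := boolP (A \in edges e); last by rewrite big_pred0.
rewrite mulr_sumr; apply: eq_bigr => B /and3P[_ _ dAB].
by rewrite prodr_set2 ?disjoint_edge_neq.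
Qed.

End SimpleGraph.

Lemma mulr_card_mean_k2 (T : finType) (e : rel T) :
  #|T|%:R * mean_k2 e = \sum_x kR e x ^+ 2.
Proof.
have [T0|Tn0] := eqVneq #|T| 0%N.
  by rewrite T0 mul0r big_pred0 // => x; move: (card0_eq T0 x); rewrite inE.
by rewrite /mean_k2 mulrA mulfV ?mul1r // pnatr_eq0.
Qed.

Theorem proposition8 (T : finType) (e : rel T) (He : simple_graph e) :
  Phi2 e = 2%:R^-1 * \sum_(A in edges e) rhs_term e A.
Proof.
case: He => e_sym e_irr.
apply: (canRL (mulKf _)); first by rewrite pnatr_eq0.
rewrite mulr_natl Phi2_ordered //; apply: eq_bigr => A AE.
by rewrite sum_edges_disjoint // /rhs_term mulr_card_mean_k2.
Qed.
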